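(* Let $\alpha<\beta\le\alpha+2\pi$, $\gamma:=\pi/(\beta-\alpha)$, $a\in(0,1)$, $r>0$, and $z\in\angle(\alpha,\beta)$. If $a|z|\ge r$, then $$\omega\bigl(z,\overline D(r);\angle(\alpha,\beta)\bigr)\le\frac{2r^{\gamma}}{\pi(1-a^{\gamma})^2}\Bigl(-\operatorname{Im}\frac1{(ze^{-i\alpha})^{\gamma}}\Bigr),$$ and if $ar\ge|z|$, then $$\omega\bigl(z,\mathbb{C}\setminus D(r);\angle(\alpha,\beta)\bigr)\le\frac{2r^{-\gamma}}{\pi(1-a^{\gamma})^2}\operatorname{Im}\,(ze^{-i\alpha})^{\gamma}.$$
   Context: $\angle(\alpha,\beta)=\{z\ne0:\ \text{some value of }\arg z\in(\alpha,\beta)\}$ is an open angle; $(ze^{-i\alpha})^{\gamma}$ is the branch on the angle that maps it conformally onto the upper half-plane and is positive on $(0,\infty)$. For $z$ in the angle with image $w$ and Borel $B$, $\omega(z,B;\angle(\alpha,\beta)):=\frac1\pi\int_{B'}\frac{\operatorname{Im}w}{(t-\operatorname{Re}w)^2+(\operatorname{Im}w)^2}dt$, where $B'\subset\mathbb{R}$ is the image of $B\cap\partial\angle(\alpha,\beta)$ under the boundary extension of this map (the harmonic measure of $B\cap\partial\angle(\alpha,\beta)$ for the angle). $D(r)$, $\overline D(r)$: open/closed discs of radius $r$ about $0$. *)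

From mathcomp Require Import all_boot all_order all_algebra.
From mathcomp Require Import all_classical all_reals all_analysis.
From mathcomp Require Export complex.
Set Implicit Arguments. Unset Strict Implicit. Unset Printing Implicit Defensive.
Import Order.TTheory GRing.Theory Num.Theory.
Local Open Scope classical_set_scope.
Local Open Scope ring_scope.
Local Open Scope complex_scope.

Section AngleDefs.
Context (R : realType).

Definition expi (t : R) : R[i] := (cos t +i* sin t)%C.

Definition angle (al be : R) : set R[i] :=
  [set z | exists rho th : R, 0 < rho /\ al < th < be /\ z = rho%:C * expi th].

Definition angle_gamma (al be : R) : R := pi / (be - al).

(** polar coordinates (|z|, arg z) of z, with the value of arg z chosen in (al,be)
    (unique when be - al <= 2 pi). *)
Definition angle_polar (al be : R) (z : R[i]) : R * R :=
  xget (0, 0) [set p : R * R | 0 < p.1 /\ al < p.2 < be /\ z = p.1%:C * expi p.2].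

(** (z e^{-i al})^gamma : the branch on ∠(al,be), positive on (0,oo),
    mapping the angle conformally onto the upper half-plane:
    for z = rho e^{i th}, al < th < be, it is rho^gamma e^{i gamma (th - al)}. *)
Definition angle_map (al be : R) (z : R[i]) : R[i] :=
  let p := angle_polar al be z in
  let g := angle_gamma al be in
  (p.1 `^ g)%:C * expi (g * (p.2 - al)).

(** Inverse of the boundary extension of angle_map: the real axis is mapped
    back onto the boundary of the angle; t >= 0 goes to the ray arg = al
    (t = rho^gamma), t < 0 goes to the ray arg = be (t = - rho^gamma).
    (For be = al + 2 pi both rays are the same set, seen from its two sides.) *)
Definition angle_bdry (al be : R) (t : R) : R[i] :=
  let g := angle_gamma al be in
  if 0 <= t then (t `^ g^-1)%:C * expi al else ((- t) `^ g^-1)%:C * expi be.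

(** B' = image of B ∩ ∂∠(al,be) under the boundary extension. *)
Definition angle_bdry_image (al be : R) (B : set R[i]) : set R :=
  angle_bdry al be @^-1` B.

(** Harmonic measure ω(z, B; ∠(al,be)) via the Poisson integral of the upper half-plane. *)
Definition harm_measure (al be : R) (z : R[i]) (B : set R[i]) : \bar R :=
  let w := angle_map al be z in
  ((pi^-1)%:E *
    \int[@lebesgue_measure R]_(t in angle_bdry_image al be B)
       ((complex.Im w / ((t - complex.Re w) ^+ 2 + (complex.Im w) ^+ 2))%:E))%E.

Definition cdisc (r : R) : set R[i] := [set u | Normc.normc u <= r].
Definition odisc (r : R) : set R[i] := [set u | Normc.normc u < r].

End AngleDefs.

(* The map w = (z e^{-i al})^gamma takes the angle onto the upper half-plane
   with |w| = |z|^gamma, and its boundary extension takes the circle |u| = r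
   to the two points t = +-s, s = r^gamma.  Both harmonic measures are thus
   Poisson integrals of Im w / |t - w|^2 over [-s, s], resp. over |t| >= s.
   With k = a^gamma < 1, the reverse triangle inequality gives
   |t - w| >= (1 - k)|w| in the first case (s <= k|w|) and |t - w| >= (1 - k)|t|
   in the second (|w| <= k s).  Integrating the resulting bounds yields
   2 s Im w / ((1 - k)^2 |w|^2) = - 2 s Im (1/w) / (1 - k)^2 and
   2 Im w / ((1 - k)^2 s). *)

From mathcomp Require Import all_boot all_order all_algebra.
From mathcomp Require Import all_classical all_reals all_analysis.
From mathcomp Require Import complex.
From mathcomp Require Import ring lra.
From mathcomp Require Import measurable_realfun.
Import Order.TTheory GRing.Theory Num.Theory.
Import numFieldNormedType.Exports.
Local Open Scope classical_set_scope.
Local Open Scope ring_scope.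
Local Open Scope complex_scope.

Section PoissonKernel.
Context {R : realType}.
Local Notation mu := (@lebesgue_measure R).

Definition poisson_kernel (u v t : R) : R := v / ((t - u) ^+ 2 + v ^+ 2).

Lemma poisson_kernel_ge0 (u v t : R) : 0 <= v -> 0 <= poisson_kernel u v t.
Proof. by move=> v0; rewrite divr_ge0// addr_ge0// sqr_ge0. Qed.

Lemma continuous_poisson_kernel (u v : R) : 0 < v -> continuous (poisson_kernel u v).
Proof.
move=> v0 t; apply: cvgM; first exact: cvg_cst.
apply: cvgV; first by rewrite gt_eqF// ltr_pwDr ?exprn_gt0// sqr_ge0.
by apply: cvgD; [apply: cvgM; apply: cvgB|]; exact: cvg_cst || exact: cvg_id.
Qed.

Lemma measurable_poisson_kernel (u v : R) (D : set R) : 0 < v ->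
  measurable_fun D (fun t : R => (poisson_kernel u v t)%:E).
Proof.
move=> v0; apply: (measurable_EFinP D (poisson_kernel u v)).2.
apply: measurable_funTS; apply: continuous_measurable_fun.
exact: continuous_poisson_kernel.
Qed.

Lemma ler_wpdiv2l (c x y : R) : 0 <= c -> 0 < x -> x <= y -> c / y <= c / x.
Proof.
by move=> c0 x0 xy; rewrite ler_wpM2l// lef_pV2// posrE (lt_le_trans x0).
Qed.

Lemma continuous_scale_inv_sqr (c : R) (D : set R) : ~ D 0 ->
  {within D, continuous (fun y : R => c / y ^+ 2)}.
Proof.
move=> D0; apply: continuous_in_subspaceT => x; rewrite inE => Dx.
apply: cvgM; first exact: cvg_cst.
apply: cvgV; last exact: exprn_continuous.
by rewrite sqrf_eq0; apply: contraPneq D0 => <-.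
Qed.

Lemma measurable_scale_inv_sqr (c : R) (D : set R) : measurable D -> ~ D 0 ->
  measurable_fun D (fun y : R => (c / y ^+ 2)%:E).
Proof.
move=> mD D0; apply: (measurable_EFinP D (fun y : R => c / y ^+ 2)).2.
exact: subspace_continuous_measurable_fun mD (continuous_scale_inv_sqr c D D0).
Qed.

Lemma is_derive_scale_inv (c x : R) : x != 0 ->
  is_derive x 1 (fun y : R => - c / y) (c / x ^+ 2).
Proof.
move=> x0.
have := is_deriveZ (- c) (is_deriveV x0 (@is_derive_id _ _ x 1)).
by rewrite /= scaler1 [_ *: _]mulrN mulNr opprK.
Qed.

Lemma integral_scale_inv_sqr_itvy (c s : R) : 0 <= c -> 0 < s ->
  (\int[mu]_(x in `[s, +oo[) (c / x ^+ 2)%:E = (c / s)%:E)%E.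
Proof.
move=> c0 s0.
have x0 x : s <= x -> x != 0 by move=> sx; rewrite gt_eqF// (lt_le_trans s0).
rewrite (@ge0_continuous_FTC2y _ _ (fun y : R => - c / y) _ 0).
- by rewrite sub0e -EFinN mulNr opprK.
- by move=> x _; rewrite divr_ge0// sqr_ge0.
- by apply: continuous_scale_inv_sqr; rewrite /= in_itv/= andbT leNgt s0.
- rewrite -(mulr0 (- c)); apply: cvgM; first exact: cvg_cst.
  exact/gtr0_cvgV0/cvg_id/nbhs_pinfty_gt.
- by move=> x sx; apply/ex_derive/is_derive_scale_inv/x0/ltW.
- apply: cvg_at_right_filter; apply: cvgM; first exact: cvg_cst.
  by apply: cvgV; [rewrite gt_eqF|exact: cvg_id].
- move=> x; rewrite in_itv/= andbT => sx.
  have dF := is_derive_scale_inv c x (x0 x (ltW sx)).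
  by rewrite derive1E derive_val.
Qed.

Lemma integral_scale_inv_sqr_itvNy (c s : R) : 0 <= c -> 0 < s ->
  (\int[mu]_(x in `]-oo, (- s)%R]) (c / x ^+ 2)%:E = (c / s)%:E)%E.
Proof.
move=> c0 s0.
rewrite ge0_integration_by_substitutionNy.
- rewrite -(integral_scale_inv_sqr_itvy c s c0 s0); apply: eq_integral => x _ /=.
  by rewrite sqrrN.
- by apply: continuous_scale_inv_sqr; rewrite /= in_itv/= lerNr oppr0 leNgt s0.
- by move=> x _; rewrite divr_ge0// sqr_ge0.
Qed.

Section KernelBounds.
Context {u v W k : R}.
Hypotheses (v0 : 0 < v) (W0 : 0 <= W) (uvW : u ^+ 2 + v ^+ 2 = W ^+ 2).
Hypotheses (k0 : 0 <= k) (k1 : k < 1).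

(* With [w = u + i v] and [|w| = W] this is [||t| - |w|| <= |t - w|]. *)
Lemma poisson_denom_ge (t : R) : (`|t| - W) ^+ 2 <= (t - u) ^+ 2 + v ^+ 2.
Proof.
have uW : `|u| <= W.
  by rewrite -(ler_sqr (normr_ge0 u) W0) real_normK ?num_real// -uvW lerDl sqr_ge0.
have tu : t * u <= `|t| * W by rewrite (le_trans (ler_norm _))// normrM ler_wpM2l.
have -> : (t - u) ^+ 2 + v ^+ 2 = t ^+ 2 - 2 * (t * u) + W ^+ 2 by rewrite -uvW; ring.
have t2 : t ^+ 2 = `|t| ^+ 2 by rewrite real_normK ?num_real.
nra.
Qed.

Let W_gt0 : 0 < W.
Proof.
have W2 : 0 < W ^+ 2 by rewrite -uvW ltr_wpDl ?sqr_ge0// exprn_gt0.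
rewrite lt0r W0 andbT; apply: contraTneq W2 => ->.
by rewrite expr0n ltxx.
Qed.

Lemma poisson_kernel_le_near (t : R) : `|t| <= k * W ->
  poisson_kernel u v t <= v / ((1 - k) ^+ 2 * W ^+ 2).
Proof.
move=> tkW; apply: ler_wpdiv2l; first exact: ltW.
  by rewrite mulr_gt0 ?exprn_gt0 ?subr_gt0 ?W_gt0.
have kWW : k * W <= W by rewrite ler_piMl// ltW.
apply: le_trans (poisson_denom_ge t).
rewrite -exprMn -[(`|t| - W) ^+ 2]sqrrN opprB ler_sqr ?nnegrE ?mulr_ge0 ?subr_ge0//.
- by rewrite mulrBl mul1r lerD2l lerN2.
- exact: ltW.
- exact: le_trans kWW.
Qed.

Lemma poisson_kernel_le_far (t : R) : W <= k * `|t| ->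
  poisson_kernel u v t <= v / (1 - k) ^+ 2 / t ^+ 2.
Proof.
move=> Wkt; rewrite -mulrA -invfM.
have kt : k * `|t| <= `|t| by rewrite ler_piMl// ltW.
have t0 : 0 < `|t| by apply: lt_le_trans kt; apply: lt_le_trans Wkt; exact: W_gt0.
rewrite -[t ^+ 2]real_normK ?num_real//.
apply: ler_wpdiv2l; first exact: ltW.
  by rewrite mulr_gt0 ?exprn_gt0 ?subr_gt0.
apply: le_trans (poisson_denom_ge t).
rewrite -exprMn ler_sqr ?nnegrE ?mulr_ge0 ?subr_ge0//.
- by rewrite mulrBl mul1r lerD2l lerN2.
- exact: ltW.
- exact: le_trans kt.
Qed.

Lemma integral_poisson_kernel_itv_le {s : R} : 0 < s -> s <= k * W ->
  (\int[mu]_(t in `[(- s)%R, s]) (poisson_kernel u v t)%:E <=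
    (v / ((1 - k) ^+ 2 * W ^+ 2) * (2 * s))%:E)%E.
Proof.
move=> s0 skW.
apply: (@le_trans _ _ (\int[mu]_(t in `[(- s)%R, s]) (v / ((1 - k) ^+ 2 * W ^+ 2))%:E)%E).
  apply: ge0_le_integral => //.
  - by move=> t _; rewrite lee_fin poisson_kernel_ge0// ltW.
  - exact: measurable_poisson_kernel.
  - move=> t; rewrite /= in_itv/= => st; rewrite lee_fin poisson_kernel_le_near//.
    by rewrite (le_trans _ skW)// ler_norml.
have := lebesgue_measure_itv `[(- s)%R, s]; rewrite /= lte_fin gtrN// => mu_itv.
by rewrite integral_cst//= mu_itv -EFinD -EFinM opprK -mulr2n mulr_natl.
Qed.

Lemma integral_poisson_kernel_tails_le {s : R} : 0 < s -> W <= k * s ->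
  (\int[mu]_(t in `]-oo, (- s)%R] `|` `[s, +oo[) (poisson_kernel u v t)%:E <=
    (v / (1 - k) ^+ 2 * (2 / s))%:E)%E.
Proof.
move=> s0 Wks; set c := v / (1 - k) ^+ 2.
have c0 : 0 <= c by rewrite divr_ge0 ?sqr_ge0 ?ltW.
have far t : s <= `|t| -> ((poisson_kernel u v t)%:E <= (c / t ^+ 2)%:E)%E.
  by move=> st; rewrite lee_fin poisson_kernel_le_far// (le_trans Wks)// ler_wpM2l.
have P0 t : (0 <= (poisson_kernel u v t)%:E)%E by rewrite lee_fin poisson_kernel_ge0 ?ltW.
rewrite ge0_integral_setU//; first last.
- rewrite disj_set2E; apply/eqP/seteqP; split => // t [].
  rewrite /= !in_itv/= andbT; lra.
- exact: measurable_poisson_kernel.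
have -> : c * (2 / s) = c / s + c / s by ring.
rewrite EFinD -{1}(integral_scale_inv_sqr_itvNy c s c0 s0) -(integral_scale_inv_sqr_itvy c s c0 s0).
apply: leeD; apply: ge0_le_integral => //.
- exact: measurable_poisson_kernel.
- by apply: measurable_scale_inv_sqr => //; rewrite /= in_itv/= lerNr oppr0 leNgt s0.
- move=> t; rewrite /= in_itv/= => ts; apply: far.
  have t0 : t <= 0 by rewrite (le_trans ts)// oppr_le0 ltW.
  by rewrite ler0_norm// lerNr.
- exact: measurable_poisson_kernel.
- by apply: measurable_scale_inv_sqr => //; rewrite /= in_itv/= andbT leNgt s0.
- move=> t; rewrite /= in_itv/= andbT => st; apply: far.
  by rewrite ger0_norm// (le_trans (ltW s0) st).
Qed.

End KernelBounds.

End PoissonKernel.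

Section AngleMap.
Context {R : realType}.
Implicit Types (al be t : R) (z : R[i]).

Lemma normc_scale_expi (x th : R) : 0 <= x -> Normc.normc (x%:C * expi th) = x.
Proof.
move=> x0; rewrite Normc.normcM /expi /= expr0n /= addr0 sqrtr_sqr ger0_norm//.
by rewrite cos2Dsin2 sqrtr1 mulr1.
Qed.

Lemma normc_sqr z : Normc.normc z ^+ 2 = complex.Re z ^+ 2 + complex.Im z ^+ 2.
Proof. by case: z => u v; rewrite /= sqr_sqrtr// addr_ge0 ?sqr_ge0. Qed.

Lemma normc_ge0 z : 0 <= Normc.normc z.
Proof. by case: z => u v; exact: sqrtr_ge0. Qed.

Lemma Im_invc z : complex.Im z^-1 = - complex.Im z / (complex.Re z ^+ 2 + complex.Im z ^+ 2).
Proof. by case: z => u v; rewrite /= mulNr. Qed.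

Lemma gt0_ler_powR2 {p : R} : 0 < p ->
  {in Num.nneg &, {mono (@powR R)^~ p : x y / x <= y}}.
Proof. by move=> p0; apply: le_mono_in; exact: gt0_ltr_powR. Qed.

Lemma powRVK (p x : R) : 0 < p -> 0 <= x -> (x `^ p^-1) `^ p = x.
Proof. by move=> p0 x0; rewrite -powRrM mulVf ?gt_eqF// powRr1. Qed.

Lemma powR_lt1 (x p : R) : 0 <= x -> x < 1 -> 0 < p -> x `^ p < 1.
Proof.
move=> x0 x1 p0.
by have := gt0_ltr_powR p0 (x0 : x \in Num.nneg) (ler01 : 1 \in Num.nneg) x1; rewrite powR1.
Qed.

Lemma ge0_ler_powRM (p x c y : R) : 0 <= p -> 0 <= x -> 0 <= c -> 0 <= y ->
  x <= c * y -> x `^ p <= c `^ p * y `^ p.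
Proof.
move=> p0 x0 c0 y0 xcy; rewrite -powRM//.
by apply: ge0_ler_powR; rewrite ?nnegrE ?mulr_ge0.
Qed.

Section PowRInv.
Variables (p x y : R).
Hypotheses (p0 : 0 < p) (x0 : 0 <= x) (y0 : 0 <= y).

Lemma powRV_le : (x `^ p^-1 <= y) = (x <= y `^ p).
Proof. by rewrite -[_ <= y](gt0_ler_powR2 p0) ?nnegrE ?powR_ge0// powRVK. Qed.

Lemma powRV_ge : (y <= x `^ p^-1) = (y `^ p <= x).
Proof. by rewrite -[y <= _](gt0_ler_powR2 p0) ?nnegrE ?powR_ge0// powRVK. Qed.

End PowRInv.

Lemma angle_gamma_gt0 {al be} : al < be -> 0 < angle_gamma al be.
Proof. by move=> ab; rewrite divr_gt0 ?pi_gt0// subr_gt0. Qed.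

Lemma normc_angle_bdry al be t :
  Normc.normc (angle_bdry al be t) = `|t| `^ (angle_gamma al be)^-1.
Proof.
rewrite /angle_bdry; case: ifPn => t0; rewrite normc_scale_expi ?powR_ge0//.
  by rewrite ger0_norm.
by rewrite ltr0_norm// ltNge.
Qed.

Section BoundaryImage.
Variables (al be r : R).
Hypotheses (ab : al < be) (r0 : 0 <= r).
Local Notation g := (angle_gamma al be).

Lemma angle_bdry_image_cdisc :
  angle_bdry_image al be (cdisc r) = `[(- r `^ g)%R, r `^ g]%classic.
Proof.
have g0 := angle_gamma_gt0 ab.
apply/seteqP; split => t;
  by rewrite /angle_bdry_image /preimage /cdisc /= normc_angle_bdry in_itv/= -ler_norml powRV_le.
Qed.

Lemma angle_bdry_image_setC_odisc :
  angle_bdry_image al be (~` odisc r) = `]-oo, (- r `^ g)%R] `|` `[r `^ g, +oo[.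
Proof.
have g0 := angle_gamma_gt0 ab.
apply/seteqP; split => t;
  rewrite /angle_bdry_image /preimage /setC /odisc /= normc_angle_bdry !in_itv/= andbT.
- move/negP; rewrite -leNgt powRV_ge//.
  by rewrite ler_normr => /orP[h|h]; [right | left; rewrite lerNr].
- move=> h; apply/negP; rewrite -leNgt powRV_ge//.
  by rewrite ler_normr; case: h => h; apply/orP; [right; rewrite -lerNr | left].
Qed.

End BoundaryImage.

Lemma angle_map_polar {al be z} : al < be -> angle al be z ->
  Normc.normc (angle_map al be z) = Normc.normc z `^ angle_gamma al be /\
  0 < complex.Im (angle_map al be z).
Proof.
move=> ab [rho0 [th0 z_polar]].
have : [set p : R * R | 0 < p.1 /\ al < p.2 < be /\ z = p.1%:C * expi p.2]
         (angle_polar al be z) by apply: xgetPex; exists (rho0, th0).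
rewrite /angle_map; case: (angle_polar al be z) => rho th [rho_gt0 [/andP[alth thbe] ->]].
set g := angle_gamma al be; have g0 : 0 < g := angle_gamma_gt0 ab.
rewrite !normc_scale_expi ?powR_ge0 ?ltW//; split => //.
rewrite /= mul0r addr0 mulr_gt0 ?powR_gt0// sin_gt0_pi// mulr_gt0 ?subr_gt0//=.
have bal : be - al != 0 by rewrite subr_eq0 gt_eqF.
by rewrite -[pi](divfK bal) -/g ltr_pM2l// ltrD2r.
Qed.

End AngleMap.

Section HarmonicMeasureBounds.
Context {R : realType}.
Variables (al be a r : R) (z : R[i]).
Hypotheses (ab : al < be) (a0 : 0 < a) (a1 : a < 1) (r0 : 0 < r) (hz : angle al be z).
Local Notation g := (angle_gamma al be).
Local Notation w := (angle_map al be z).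

Lemma harm_measureE (B : set R[i]) : harm_measure al be z B =
  ((pi^-1)%:E * \int[@lebesgue_measure R]_(t in angle_bdry_image al be B)
     (poisson_kernel (complex.Re w) (complex.Im w) t)%:E)%E.
Proof. by []. Qed.

Let g0 : 0 < g := angle_gamma_gt0 ab.
Let k0 : 0 <= a `^ g := powR_ge0 _ _.
Let k1 : a `^ g < 1 := powR_lt1 a g (ltW a0) a1 g0.
Let pi0 : (0 <= (pi : R)^-1%:E)%E.
Proof. by rewrite lee_fin invr_ge0 pi_ge0. Qed.

Let w_polar := angle_map_polar ab hz.
Let Imw_gt0 : 0 < complex.Im w := w_polar.2.
Let normw : complex.Re w ^+ 2 + complex.Im w ^+ 2 = (Normc.normc z `^ g) ^+ 2.
Proof. by rewrite -normc_sqr w_polar.1. Qed.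

Let k1_neq0 : 1 - a `^ g != 0.
Proof. by rewrite subr_eq0 gt_eqF. Qed.
Let pi_neq0 : (pi : R) != 0 := lt0r_neq0 (pi_gt0 R).
Let s_neq0 : r `^ g != 0 := lt0r_neq0 (powR_gt0 g r0).
Let W_neq0 : Normc.normc z `^ g != 0.
Proof.
by rewrite -sqrf_eq0 -normw lt0r_neq0// ltr_wpDl ?sqr_ge0// exprn_gt0.
Qed.

Lemma harm_measure_cdisc_le : r <= a * Normc.normc z ->
  (harm_measure al be z (cdisc r) <=
    ((2 * r `^ g) / (pi * (1 - a `^ g) ^+ 2) * (- complex.Im w^-1))%:E)%E.
Proof.
move=> raz.
have skW : r `^ g <= a `^ g * Normc.normc z `^ g.
  exact: ge0_ler_powRM (ltW g0) (ltW r0) (ltW a0) (normc_ge0 z) raz.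
rewrite harm_measureE angle_bdry_image_cdisc ?(ltW r0)//.
apply: (le_trans (lee_wpmul2l pi0 (integral_poisson_kernel_itv_le
  Imw_gt0 (powR_ge0 _ _) normw k1 (powR_gt0 g r0) skW))).
rewrite -EFinM lee_fin le_eqVlt; apply/orP; left; apply/eqP.
rewrite Im_invc mulNr opprK normw.
(* [field] would unfold [pi], so abstract it first. *)
move: (pi : R) pi_neq0 => p p_neq0.
by field; rewrite W_neq0 k1_neq0 p_neq0.
Qed.

Lemma harm_measure_setC_odisc_le : Normc.normc z <= a * r ->
  (harm_measure al be z (~` odisc r) <=
    ((2 * r `^ (- g)) / (pi * (1 - a `^ g) ^+ 2) * complex.Im w)%:E)%E.
Proof.
move=> zar.
have Wks : Normc.normc z `^ g <= a `^ g * r `^ g.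
  exact: ge0_ler_powRM (ltW g0) (normc_ge0 z) (ltW a0) (ltW r0) zar.
rewrite harm_measureE angle_bdry_image_setC_odisc ?(ltW r0)//.
apply: (le_trans (lee_wpmul2l pi0 (integral_poisson_kernel_tails_le
  Imw_gt0 (powR_ge0 _ _) normw k0 k1 (powR_gt0 g r0) Wks))).
rewrite -EFinM lee_fin le_eqVlt; apply/orP; left; apply/eqP.
rewrite powRN.
move: (pi : R) pi_neq0 => p p_neq0.
by field; rewrite s_neq0 k1_neq0 p_neq0.
Qed.

End HarmonicMeasureBounds.

(* The hypothesis [be <= al + 2 * pi] only makes the branch single-valued: the
   bounds hold for whichever argument [angle_polar] picks. *)
Theorem proposition13 (R : realType) (al be a r : R) (z : R[i]) :
  al < be -> be <= al + 2 * pi ->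
  0 < a < 1 -> 0 < r -> angle al be z ->
  (r <= a * Normc.normc z ->
     (harm_measure al be z (cdisc r) <=
       ((2 * r `^ (pi / (be - al))) / (pi * (1 - a `^ (pi / (be - al))) ^+ 2)
          * (- complex.Im ((angle_map al be z)^-1)))%:E)%E) /\
  (a * r >= Normc.normc z ->
     (harm_measure al be z (~` odisc r) <=
       ((2 * r `^ (- (pi / (be - al)))) / (pi * (1 - a `^ (pi / (be - al))) ^+ 2)
          * complex.Im (angle_map al be z))%:E)%E).
Proof.
move=> ab _ /andP[a0 a1] r0 hz; split.
- exact: harm_measure_cdisc_le.
- exact: harm_measure_setC_odisc_le.
Qed.
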